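(* For every $n\in\mathbb{N}$, all nonempty chains $c_k,c_s$ over $[n]$, and all formulas $\varphi,\psi$: letting $c_r$ be the chain of symbols common to $c_k$ and $c_s$, $$\vdash_{(n)}\neg_{c_k}\varphi\to_{(n)}\big(\neg_{c_s}\psi\to_{(n)}\neg_{c_s\otimes c_r}(\varphi\to_{(n)}\psi)\big).$$
   Context: Fix $n\in\mathbb{N}$, $n\ge 1$, and write $[n]=\{1,\dots,n\}$. Chains: a chain over $[n]$ is a finite sequence of distinct elements of $[n]$; chains with the same length and the same symbols are identified, so a chain is effectively a subset of $[n]$. $c_k$ denotes a chain with $k$ symbols, $\epsilon$ the empty chain, and $(n)$ the chain consisting of all symbols of $[n]$. For chains $c,d$: the concatenation $c\cdot d$ is the chain of symbols occurring in $c$ or in $d$; the coconcatenation $c\otimes d$ is the chain of symbols occurring in exactly one of $c,d$; $d$ is a subchain of $c$ if every symbol of $d$ is a symbol of $c$. The complementary chain $c'_{n-k}$ of $c_k$ is the chain of the symbols of $[n]$ not occurring in $c_k$. Language of $\mathbf{CPN}_n$: a countable set $P_n$ of propositional letters; constants $\perp_c$ for each chain $c$ over $[n]$ with $1\le |c|\le n-1$, and constants $\perp_{(n)}$ (contradiction) and $\top_{(n)}$ (truth); a unary connective $\neg_c$ for each nonempty chain $c$ over $[n]$ ($\neg_{(n)}$ is the strong negation; the $\neg_c$ with $|c|\le n-1$ are weak negations); a binary connective $\to_{(n)}$. Formulas: propositional letters and constants are formulas; if $\varphi,\psi$ are formulas then so are $\neg_c\varphi$ and $(\varphi\to_{(n)}\psi)$.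 Conventions: $\neg_\epsilon\varphi:=\varphi$, $\perp_\epsilon:=\top_{(n)}$, and $\perp_c$ for $c=(n)$ means $\perp_{(n)}$. Abbreviations: $\varphi\wedge_{(n)}\psi:=\neg_{(n)}(\varphi\to_{(n)}\neg_{(n)}\psi)$, $\varphi\vee_{(n)}\psi:=\neg_{(n)}\varphi\to_{(n)}\psi$, $\varphi\leftrightarrow_{(n)}\psi:=(\varphi\to_{(n)}\psi)\wedge_{(n)}(\psi\to_{(n)}\varphi)$. Axioms of $\mathbf{CPN}_n$, for all formulas $\varphi,\psi,\chi$ and all nonempty chains $c_k,c_r$ over $[n]$: (A1) $\varphi\to_{(n)}(\psi\to_{(n)}\varphi)$; (A2) $(\varphi\to_{(n)}(\psi\to_{(n)}\chi))\to_{(n)}((\varphi\to_{(n)}\psi)\to_{(n)}(\varphi\to_{(n)}\chi))$; (A3) $(\neg_{(n)}\psi\to_{(n)}\neg_{(n)}\varphi)\to_{(n)}((\neg_{(n)}\psi\to_{(n)}\varphi)\to_{(n)}\psi)$; (A4) $\varphi\to_{(n)}(\perp_{c_k}\to_{(n)}\neg_{c_k}\varphi)$; (A5) $\neg_{c_k}\neg_{c_r}\varphi\leftrightarrow_{(n)}\neg_{c_k\otimes c_r}\varphi$; (A6) $\neg_{c_k}\perp_{c_r}\leftrightarrow_{(n)}\perp_{c_k\otimes c_r}$; (A7) $\perp_{c_k}\to_{(n)}\perp_{c_r}$, whenever $c_r$ is a subchain of $c_k$. The only rule of inference is modus ponens (from $\varphi$ and $\varphi\to_{(n)}\psi$ infer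 $\psi$). For a set $\Sigma$ of formulas, $\Sigma\vdash_{(n)}\varphi$ means there is a finite sequence of formulas ending with $\varphi$, each of which is an axiom, a member of $\Sigma$, or obtained from two earlier members by modus ponens; $\vdash_{(n)}\varphi$ means $\emptyset\vdash_{(n)}\varphi$. *)

(* Chains over [n] are identified with subsets of 'I_n. *)
From mathcomp Require Import all_boot.
Set Implicit Arguments. Unset Strict Implicit. Unset Printing Implicit Defensive.

Section CPN.
Variable n : nat.

Definition chain := {set 'I_n}.

Definition cocat (c d : chain) : chain := (c :\: d) :|: (d :\: c).
Definition cat_ch (c d : chain) : chain := c :|: d.
Definition common (c d : chain) : chain := c :&: d.

(* Bot c encodes the constants: Bot set0 = top_(n), Bot setT = bot_(n),
   Bot c with 1 <= |c| <= n-1 = bot_c.  Neg c is only available for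
   nonempty chains c (neg_(n) is Neg setT). *)
Inductive form : Type :=
  | Var : nat -> form
  | Bot : chain -> form
  | Neg : forall c : chain, c != set0 -> form -> form
  | Imp : form -> form -> form.

(* neg_c with the convention neg_eps phi := phi *)
Definition neg (c : chain) (phi : form) : form :=
  match boolP (c != set0) with
  | AltTrue h => Neg h phi
  | AltFalse _ => phi
  end.

Definition sneg (phi : form) : form := neg setT phi.
Definition fand (phi psi : form) : form := sneg (Imp phi (sneg psi)).
Definition for_ (phi psi : form) : form := Imp (sneg phi) psi.
Definition fiff (phi psi : form) : form := fand (Imp phi psi) (Imp psi phi).

Inductive axiom : form -> Prop :=
  | A1 phi psi : axiom (Imp phi (Imp psi phi))
  | A2 phi psi chi :
      axiom (Imp (Imp phi (Imp psi chi)) (Imp (Imp phi psi) (Imp phi chi)))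
  | A3 phi psi :
      axiom (Imp (Imp (sneg psi) (sneg phi)) (Imp (Imp (sneg psi) phi) psi))
  | A4 (ck : chain) phi : ck != set0 ->
      axiom (Imp phi (Imp (Bot ck) (neg ck phi)))
  | A5 (ck cr : chain) phi : ck != set0 -> cr != set0 ->
      axiom (fiff (neg ck (neg cr phi)) (neg (cocat ck cr) phi))
  | A6 (ck cr : chain) : ck != set0 -> cr != set0 ->
      axiom (fiff (neg ck (Bot cr)) (Bot (cocat ck cr)))
  | A7 (ck cr : chain) : ck != set0 -> cr != set0 -> cr \subset ck ->
      axiom (Imp (Bot ck) (Bot cr)).

Inductive derivable (Sigma : form -> Prop) : form -> Prop :=
  | d_ax phi : axiom phi -> derivable Sigma phi
  | d_hyp phi : Sigma phi -> derivable Sigma phi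
  | d_mp phi psi : derivable Sigma phi -> derivable Sigma (Imp phi psi) ->
                   derivable Sigma psi.

Definition provable (phi : form) : Prop := derivable (fun _ => False) phi.

End CPN.

(* Over CPN_n the constants ⊥_c behave like propositional atoms, and the
   weak negations are expressible through them: ¬_c φ is equivalent to
   φ ↔ ⊥_c, the constant of a coconcatenation is the biconditional
   ⊥_(a ⊗ b) ↔ (⊥_b ↔ ⊥_a), and for disjoint chains a, b at least one of
   ⊥_a, ⊥_b holds.  Writing u = c_k ∩ c_s, p = c_s \ c_k and q = c_k \ c_s
   (pairwise disjoint, with c_k = u ⊗ q, c_s = u ⊗ p and c_s ⊗ c_r = p),
   the theorem becomes a propositional tautology in φ, ψ, ⊥_u, ⊥_p, ⊥_q.
   Tautologies are provable because A1–A3 with modus ponens form a complete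
   Hilbert calculus for implication and strong negation (Kalmár's proof). *)
From mathcomp Require Import all_boot.
Set Implicit Arguments. Unset Strict Implicit. Unset Printing Implicit Defensive.

Section HilbertCalculus.
Variable n : nat.
Implicit Types (S : form n -> Prop) (A B C : form n).

Definition extend S A : form n -> Prop := fun x => S x \/ x = A.

Lemma derivable_weaken S S' A :
  (forall x, S x -> S' x) -> derivable S A -> derivable S' A.
Proof.
move=> sub; elim=> [x ax|x Sx|x y _ dx _ dxy].
- exact: d_ax.
- exact/d_hyp/sub.
- exact: d_mp dx dxy.
Qed.

Lemma derivable_extend S A B : derivable S B -> derivable (extend S A) B.
Proof. by apply: derivable_weaken => x; left. Qed.

Lemma derivable_new_hyp S A : derivable (extend S A) A.
Proof. by apply: d_hyp; right. Qed.

Lemma ax_A1 S A B : derivable S (Imp A (Imp B A)).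
Proof. exact/d_ax/A1. Qed.

Lemma ax_A2 S A B C :
  derivable S (Imp (Imp A (Imp B C)) (Imp (Imp A B) (Imp A C))).
Proof. exact/d_ax/A2. Qed.

Lemma ax_A3 S A B :
  derivable S (Imp (Imp (sneg B) (sneg A)) (Imp (Imp (sneg B) A) B)).
Proof. exact/d_ax/A3. Qed.

Lemma imp_refl S A : derivable S (Imp A A).
Proof. exact: d_mp (ax_A1 _ A A) (d_mp (ax_A1 _ A (Imp A A)) (ax_A2 _ _ _ _)). Qed.

Lemma deduction S A B : derivable (extend S A) B -> derivable S (Imp A B).
Proof.
elim=> [x ax|x [Sx|->]|x y _ dx _ dxy].
- exact: d_mp (d_ax _ ax) (ax_A1 _ _ _).
- exact: d_mp (d_hyp Sx) (ax_A1 _ _ _).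
- exact: imp_refl.
- exact: d_mp dx (d_mp dxy (ax_A2 _ _ _ _)).
Qed.

Lemma dneg_elim S B : derivable S (Imp (sneg (sneg B)) B).
Proof.
apply: deduction; apply: d_mp (imp_refl _ _) _.
apply: d_mp (ax_A3 _ (sneg B) B).
exact: d_mp (derivable_new_hyp _ _) (ax_A1 _ _ _).
Qed.

Lemma dneg_intro S B : derivable S (Imp B (sneg (sneg B))).
Proof.
apply: deduction.
apply: d_mp (d_mp (derivable_new_hyp _ _) (ax_A1 _ _ (sneg (sneg (sneg B))))) _.
exact: d_mp (dneg_elim _ _) (ax_A3 _ B (sneg (sneg B))).
Qed.

Lemma ex_falso S A B : derivable S (Imp (sneg A) (Imp A B)).
Proof.
do 2 apply: deduction.
apply: d_mp (d_mp (derivable_new_hyp _ _) (ax_A1 _ _ (sneg B))) _.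
apply: d_mp (ax_A3 _ A B).
exact: d_mp (derivable_extend _ (derivable_new_hyp _ _)) (ax_A1 _ _ _).
Qed.

Lemma imp_of_contra S A B : derivable S (Imp (Imp (sneg B) (sneg A)) (Imp A B)).
Proof.
do 2 apply: deduction.
apply: d_mp (d_mp (derivable_new_hyp _ _) (ax_A1 _ _ (sneg B))) _.
exact: d_mp (derivable_extend _ (derivable_new_hyp _ _)) (ax_A3 _ A B).
Qed.

Lemma contra_of_imp S A B : derivable S (Imp (Imp A B) (Imp (sneg B) (sneg A))).
Proof.
apply: deduction; apply: d_mp _ (imp_of_contra _ (sneg B) (sneg A)).
apply: deduction; apply: d_mp _ (dneg_intro _ _).
apply: d_mp (derivable_extend _ (derivable_new_hyp _ _)).
exact: d_mp (derivable_new_hyp _ _) (dneg_elim _ _).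
Qed.

Lemma neg_imp_intro S A B : derivable S (Imp A (Imp (sneg B) (sneg (Imp A B)))).
Proof.
apply: deduction; apply: d_mp _ (contra_of_imp _ _ _).
apply: deduction.
exact: d_mp (derivable_extend _ (derivable_new_hyp _ _)) (derivable_new_hyp _ _).
Qed.

Lemma imp_cases S A B : derivable S (Imp (Imp A B) (Imp (Imp (sneg A) B) B)).
Proof.
do 2 apply: deduction.
apply: d_mp (d_mp (derivable_extend _ (derivable_new_hyp _ _)) (contra_of_imp _ _ _)) _.
apply: d_mp (d_mp (derivable_new_hyp _ _) (contra_of_imp _ _ _)) _.
exact: ax_A3.
Qed.

End HilbertCalculus.

Inductive pform := PAtom of nat | PImp of pform & pform | PNeg of pform.

Fixpoint peval (v : nat -> bool) p := match p with
  | PAtom i => v i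
  | PImp p q => peval v p ==> peval v q
  | PNeg p => ~~ peval v p
  end.

Fixpoint pbounded m p := match p with
  | PAtom i => i < m
  | PImp p q => pbounded m p && pbounded m q
  | PNeg p => pbounded m p
  end.

Definition upd (v : nat -> bool) j b := fun i => if i == j then b else v i.

(* [ptautb m v p] checks [p] under the [2 ^ m] valuations that agree with
   [v] from the atom [m] on. *)
Fixpoint ptautb m v p := match m with
  | 0 => peval v p
  | m'.+1 => ptautb m' (upd v m' true) p && ptautb m' (upd v m' false) p
  end.

Section Completeness.
Variable n : nat.
Variable a : nat -> form n.

Fixpoint pinterp p := match p with
  | PAtom i => a i
  | PImp p q => Imp (pinterp p) (pinterp q)
  | PNeg p => sneg (pinterp p)
  end.

Definition literal v i := if v i then a i else sneg (a i).

Definition literals v lo hi : form n -> Prop :=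
  fun x => exists2 i, lo <= i < hi & x = literal v i.

Lemma kalmar v m p : pbounded m p ->
  derivable (literals v 0 m) (if peval v p then pinterp p else sneg (pinterp p)).
Proof.
elim: p => [i|p IHp q IHq|p IHp] /=.
- by move=> lt_im; apply: d_hyp; exists i.
- case/andP=> /IHp dp /IHq dq.
  case: (peval v p) dp => dp; case: (peval v q) dq => dq /=.
  + exact: d_mp dq (ax_A1 _ _ _).
  + exact: d_mp dq (d_mp dp (neg_imp_intro _ _ _)).
  + exact: d_mp dp (ex_falso _ _ _).
  + exact: d_mp dp (ex_falso _ _ _).
- by move/IHp; case: (peval v p) => //= dp; apply: d_mp dp (dneg_intro _ _).
Qed.

Lemma literals_upd_sub v j m b x :
  literals (upd v j b) j m x -> extend (literals v j.+1 m) (literal (upd v j b) j) x.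
Proof.
case=> i /andP[le_ji lt_im] ->; case: (eqVneq i j) => [->|ne_ij]; [by right|left].
exists i; first by rewrite lt_im andbT ltn_neqAle eq_sym ne_ij.
by rewrite /literal /upd (negbTE ne_ij).
Qed.

(* Kalmár's elimination of the literals, one atom at a time. *)
Lemma derivable_from_literals m p : pbounded m p ->
  forall j v, j <= m -> ptautb j v p -> derivable (literals v j m) (pinterp p).
Proof.
move=> bp; elim=> [|j IH] v le_jm /=.
  by move=> pv; move: (kalmar v bp); rewrite pv.
case/andP=> /(IH _ (ltnW le_jm)) dT /(IH _ (ltnW le_jm)) dF.
have := deduction (derivable_weaken (@literals_upd_sub v j m true) dT).
have := deduction (derivable_weaken (@literals_upd_sub v j m false) dF).
rewrite /literal /upd eqxx /= => dneg dpos.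
exact: d_mp dneg (d_mp dpos (imp_cases _ _ _)).
Qed.

Lemma ptautb_provable m p :
  pbounded m p && ptautb m (fun _ => false) p -> provable (pinterp p).
Proof.
case/andP=> bp /(derivable_from_literals bp (leqnn m)).
apply: derivable_weaken => x [i /andP[le_mi lt_im] _].
by have := leq_trans lt_im le_mi; rewrite ltnn.
Qed.

End Completeness.

Ltac atoms_of t l :=
  lazymatch t with
  | Imp ?A ?B => let l := atoms_of A l in atoms_of B l
  | neg setT ?A => atoms_of A l
  | _ =>
    let rec mem l := lazymatch l with
      | nil => constr:(false)
      | cons t _ => constr:(true)
      | cons _ ?l' => mem l'
      end in
    lazymatch mem l with true => l | false => constr:(cons t l) end
  end.

Ltac reify_pform t l :=
  lazymatch t with
  | Imp ?A ?B =>
    let p := reify_pform A l in let q := reify_pform B l in constr:(PImp p q)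
  | neg setT ?A => let p := reify_pform A l in constr:(PNeg p)
  | _ =>
    let rec index l := lazymatch l with
      | cons t _ => constr:(0)
      | cons _ ?l' => let i := index l' in constr:(i.+1)
      end in
    let i := index l in constr:(PAtom i)
  end.

(* Proves [provable G] when [H1 -> ... -> Hk -> G] is a propositional
   tautology in [Imp] and [sneg], where the [provable Hi] are premises of the
   goal or hypotheses in the context; other subformulas are treated as atoms. *)
Ltac ptaut :=
  repeat match goal with |- provable _ -> _ => move=> ? end;
  repeat match goal with h : provable _ |- _ => apply: (d_mp h); clear h end;
  unfold fiff, fand, sneg;
  lazymatch goal with |- @derivable ?n _ ?t =>
    let l := atoms_of t (@nil (form n)) in
    let p := reify_pform t l in
    change (provable (pinterp (nth (Bot set0) l) p));
    apply: (@ptautb_provable _ _ (size l)); vm_compute; reflexivity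
  end.

Ltac chain_eq := apply/setP => x; rewrite /cocat /common !inE;
  do ?case: (_ \in _) => //.

Section Constants.
Variable n : nat.
Hypothesis n_gt0 : 0 < n.
Implicit Types (a b c : chain n) (phi : form n).

Lemma ax_provable phi : axiom phi -> provable phi.
Proof. exact: d_ax. Qed.

Lemma setT_neq0 : [set: 'I_n] != set0.
Proof. by apply/set0Pn; exists (Ordinal n_gt0). Qed.

Lemma setC_neq0 c : c != setT -> ~: c != set0.
Proof. by apply: contra => /eqP/(congr1 (@setC _)); rewrite setCK setC0 => ->. Qed.

Lemma neg_set0 phi : neg set0 phi = phi.
Proof.
rewrite /neg; destruct (boolP (set0 != set0)) as [ne00|] => //.
by exfalso; move: ne00; rewrite eqxx.
Qed.

Lemma cocatid c : cocat c c = set0. Proof. chain_eq. Qed.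
Lemma cocat0s c : cocat set0 c = c. Proof. chain_eq. Qed.
Lemma cocats0 c : cocat c set0 = c. Proof. chain_eq. Qed.
Lemma cocatTC c : cocat setT (~: c) = c. Proof. chain_eq. Qed.

Lemma provable_sneg_botT : provable (sneg (Bot (setT : chain n))).
Proof.
have refl : provable (Imp (@Var n 0) (@Var n 0)) by exact: imp_refl.
have := ax_provable (A4 (Imp (@Var n 0) (@Var n 0)) setT_neq0).
ptaut.
Qed.

Lemma provable_bot0 : provable (Bot (set0 : chain n)).
Proof.
have := provable_sneg_botT.
have := ax_provable (A6 setT_neq0 setT_neq0); rewrite cocatid.
ptaut.
Qed.

Lemma neg_of_bot c phi : c != set0 ->
  provable (Imp (Bot c) (fiff (neg c phi) phi)).
Proof.
move=> c0.
have := ax_provable (A4 phi c0).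
have := ax_provable (A4 (neg c phi) c0).
have := ax_provable (A5 phi c0 c0); rewrite cocatid neg_set0.
ptaut.
Qed.

(* For the complement c' of c, A6 and A5 give ¬⊥_c ↔ ⊥_(c') and ¬_c φ ↔ ¬_(n) ¬_(c') φ. *)
Lemma neg_of_sneg_bot c phi : c != set0 -> c != setT ->
  provable (Imp (sneg (Bot c)) (fiff (neg c phi) (sneg phi))).
Proof.
move=> c0 /setC_neq0 cC0.
have := ax_provable (A6 setT_neq0 cC0); rewrite cocatTC.
have := ax_provable (A5 phi setT_neq0 cC0); rewrite cocatTC.
have := neg_of_bot phi cC0.
ptaut.
Qed.

Lemma neg_iff_bot c phi : provable (fiff (neg c phi) (fiff phi (Bot c))).
Proof.
have := provable_sneg_botT; have := provable_bot0.
case: (eqVneq c set0) => [->|c0]; first by rewrite neg_set0; ptaut.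
case: (eqVneq c setT) => [->|cT]; first by ptaut.
have := neg_of_bot phi c0; have := neg_of_sneg_bot phi c0 cT.
ptaut.
Qed.

Lemma bot_cocat a b : provable (fiff (Bot (cocat a b)) (fiff (Bot b) (Bot a))).
Proof.
have := provable_bot0.
case: (eqVneq a set0) => [->|a0]; first by rewrite cocat0s; ptaut.
case: (eqVneq b set0) => [->|b0]; first by rewrite cocats0; ptaut.
have := ax_provable (A6 a0 b0); have := neg_iff_bot a (Bot b).
ptaut.
Qed.

Lemma bot_disjoint a b : a :&: b = set0 -> provable (Imp (sneg (Bot a)) (Bot b)).
Proof.
move=> ab0; have := provable_bot0.
case: (eqVneq a set0) => [->|a0]; first by ptaut.
have sub_a : a \subset cocat a b.
  apply/subsetP => x ax; rewrite /cocat !inE ax /=.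
  by move/setP: ab0 => /(_ x); rewrite !inE ax /= => ->.
have ab_neq0 : cocat a b != set0.
  by case/set0Pn: a0 => x ax; apply/set0Pn; exists x; apply: (subsetP sub_a).
have := ax_provable (A7 ab_neq0 a0 sub_a); have := bot_cocat a b.
ptaut.
Qed.

End Constants.

Theorem mainTheorem7 (n : nat) (hn : 0 < n) (ck cs : chain n)
  (hk : ck != set0) (hs : cs != set0) (phi psi : form n) :
  let cr := common ck cs in
  provable (Imp (neg ck phi) (Imp (neg cs psi) (neg (cocat cs cr) (Imp phi psi)))).
Proof.
move=> cr; have -> : cocat cs cr = cs :\: ck by rewrite /cr; chain_eq.
set u := cs :&: ck; set p := cs :\: ck; set q := ck :\: cs.
have ck_uq : cocat u q = ck by rewrite /u /q; chain_eq.
have cs_up : cocat u p = cs by rewrite /u /p; chain_eq.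
have up0 : u :&: p = set0 by rewrite /u /p; chain_eq.
have uq0 : u :&: q = set0 by rewrite /u /q; chain_eq.
have pq0 : p :&: q = set0 by rewrite /p /q; chain_eq.
have := neg_iff_bot hn ck phi; have := neg_iff_bot hn cs psi.
have := neg_iff_bot hn p (Imp phi psi).
have := bot_cocat hn u q; rewrite ck_uq.
have := bot_cocat hn u p; rewrite cs_up.
have := bot_disjoint hn up0; have := bot_disjoint hn uq0.
have := bot_disjoint hn pq0.
ptaut.
Qed.
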